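(* Let $\mathbf{n}^\xi_{1:H}$ be a sequence of count tables generated by the joint state-action trajectory of $M$ agents over horizon $H$ (as described in the context), and define for $t=1,\dots,H$ $$R^\xi_t=\sum_{T=t}^H\sum_{i\in S,j\in A}n^\xi_T(i,j)\,r_T\big(i,j,\mathbf{n}^\xi_T\big).$$ Let $V^\xi_t(i,j)$ be the individual value function defined in the context. Then for every $t$, $$R^\xi_t=\sum_{i\in S,j\in A}n^\xi_t(i,j)\,V^\xi_t(i,j).$$
   Context: There are $M$ agents, a finite local state space $S$, finite action set $A$, horizon $H$. A joint trajectory assigns each agent $m$ states $s^m_1,\dots,s^m_H\in S$ and actions $a^m_1,\dots,a^m_H\in A$. Its counts are $n^\xi_t(i)=|\{m:s^m_t=i\}|$, $n^\xi_t(i,j)=|\{m:(s^m_t,a^m_t)=(i,j)\}|$, $n^\xi_t(i,j,i')=|\{m:(s^m_t,a^m_t,s^m_{t+1})=(i,j,i')\}|$ for $t<H$, and $\mathbf{n}^\xi_t=(n^\xi_t(i))_{i\in S}$. $r_t(i,j,\mathbf{n})$ is a given real-valued local reward function. The individual value function is defined, for pairs $(i,j)$ with $n^\xi_t(i,j)>0$, by backward recursion: $V^\xi_H(i,j)=r_H(i,j,\mathbf{n}^\xi_H)$ and, for $t<H$, $$V^\xi_t(i,j)=r_t(i,j,\mathbf{n}^\xi_t)+\sum_{i'\in S,j'\in A}\frac{n^\xi_t(i,j,i')}{n^\xi_t(i,j)}\cdot\frac{n^\xi_{t+1}(i',j')}{n^\xi_{t+1}(i')}\,V^\xi_{t+1}(i',j'),$$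 where terms with zero count numerator are taken to be $0$; likewise $n^\xi_t(i,j)V^\xi_t(i,j)$ is taken to be $0$ when $n^\xi_t(i,j)=0$. *)

From HB Require Import structures.
From mathcomp Require Import all_boot all_order all_algebra.
Set Implicit Arguments. Unset Strict Implicit. Unset Printing Implicit Defensive.
Import Order.TTheory GRing.Theory Num.Theory.
Local Open Scope ring_scope.

Section MF.
Variables (R : realFieldType) (S A : finType) (M H : nat).
(* joint trajectory: state and action of agent m at time t (only t = 1..H matter) *)
Variables (s : 'I_M -> nat -> S) (a : 'I_M -> nat -> A).
(* local reward r_t(i, j, n) where n : S -> nat is the state-count table *)
Variable (r : nat -> S -> A -> (S -> nat) -> R).

Definition cnt_s (t : nat) (i : S) : nat := #|[set m : 'I_M | s m t == i]|.
Definition cnt_sa (t : nat) (i : S) (j : A) : nat :=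
  #|[set m : 'I_M | (s m t == i) && (a m t == j)]|.
Definition cnt_sas (t : nat) (i : S) (j : A) (i' : S) : nat :=
  #|[set m : 'I_M | [&& s m t == i, a m t == j & s m t.+1 == i']]|.

Definition nvec (t : nat) : S -> nat := cnt_s t.

Definition Vterm (t : nat) (i : S) (j : A) (i' : S) (j' : A) (v : R) : R :=
  if (cnt_sas t i j i' == 0%N) || (cnt_sa t.+1 i' j' == 0%N) then 0
  else (cnt_sas t i j i')%:R / (cnt_sa t i j)%:R *
       ((cnt_sa t.+1 i' j')%:R / (cnt_s t.+1 i')%:R) * v.

(* Vrec k t = value at time t, with k = H - t steps remaining *)
Fixpoint Vrec (k t : nat) (i : S) (j : A) : R :=
  match k with
  | 0 => r t i j (nvec t)
  | k'.+1 => r t i j (nvec t) +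
      \sum_(i' : S) \sum_(j' : A) Vterm t i j i' j' (Vrec k' t.+1 i' j')
  end.

Definition Vind (t : nat) (i : S) (j : A) : R := Vrec (H - t) t i j.

Definition Rret (t : nat) : R :=
  \sum_(t <= T < H.+1) \sum_(i : S) \sum_(j : A)
     (cnt_sa T i j)%:R * r T i j (nvec T).

Definition nV (t : nat) (i : S) (j : A) : R :=
  if cnt_sa t i j == 0%N then 0 else (cnt_sa t i j)%:R * Vind t i j.
End MF.

From HB Require Import structures.
From mathcomp Require Import all_boot all_order all_algebra.
Import Order.TTheory GRing.Theory Num.Theory.
Local Open Scope ring_scope.

(* Weighting V_t(i,j) by n_t(i,j) cancels the denominator of the empirical
   transition n_t(i,j,i')/n_t(i,j).  Summing over (i,j) then collapses
   n_t(i,j,i') to n_{t+1}(i') (every agent at i' at time t+1 came from some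
   state-action pair), which cancels the denominator of the empirical policy
   n_{t+1}(i',j')/n_{t+1}(i').  Hence sum_{i,j} n_t(i,j) V_t(i,j) obeys the
   same backward recursion as R_t: it is the stage-t reward plus
   sum_{i',j'} n_{t+1}(i',j') V_{t+1}(i',j'). *)

Lemma exchange_big22 (V : nmodType) (I J K L : finType)
    (F : I -> J -> K -> L -> V) :
  \sum_(i : I) \sum_(j : J) \sum_(k : K) \sum_(l : L) F i j k l
  = \sum_(k : K) \sum_(l : L) \sum_(i : I) \sum_(j : J) F i j k l.
Proof.
rewrite pair_bigA [RHS]pair_bigA /=.
under eq_bigr do rewrite pair_bigA.
under [RHS]eq_bigr do rewrite pair_bigA.
exact: exchange_big.
Qed.

Lemma natr_mul_divr (F : numFieldType) (m n : nat) :
  (m <= n)%N -> n%:R * (m%:R / n%:R) = m%:R :> F.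
Proof.
have [-> | n_gt0] := posnP n; first by rewrite leqn0 => /eqP ->; rewrite mul0r.
by move=> _; rewrite mulrCA divff ?mulr1 // pnatr_eq0 -lt0n.
Qed.

Section EmpiricalCounts.
Variables (R : realFieldType) (S A : finType) (M : nat).
Variables (s : 'I_M -> nat -> S) (a : 'I_M -> nat -> A).

Lemma cnt_sas_le_sa t i j i' : (cnt_sas s a t i j i' <= cnt_sa s a t i j)%N.
Proof.
apply: subset_leq_card; apply/subsetP => m; rewrite !inE.
by case/and3P => -> ->.
Qed.

Lemma cnt_sa_le_s t i j : (cnt_sa s a t i j <= cnt_s s t i)%N.
Proof.
apply: subset_leq_card; apply/subsetP => m; rewrite !inE.
by case/andP => ->.
Qed.

Lemma sum_cnt_sas t i' :
  (\sum_(i : S) \sum_(j : A) cnt_sas s a t i j i')%N = cnt_s s t.+1 i'.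
Proof.
rewrite /cnt_s -sum1dep_card (partition_big (fun m => s m t) xpredT) //=.
apply: eq_bigr => i _; rewrite (partition_big (fun m => a m t) xpredT) //=.
apply: eq_bigr => j _; rewrite /cnt_sas -sum1dep_card; apply: eq_bigl => m.
by case: (s m t.+1 == i'); case: (s m t == i); case: (a m t == j).
Qed.

Lemma cnt_sa_mul_Vterm t i j i' j' (v : R) :
  (cnt_sa s a t i j)%:R * Vterm s a t i j i' j' v
  = (cnt_sas s a t i j i')%:R *
      ((cnt_sa s a t.+1 i' j')%:R / (cnt_s s t.+1 i')%:R * v).
Proof.
rewrite /Vterm; have [-> | _] /= := eqVneq (cnt_sas s a t i j i') 0%N.
  by rewrite mulr0 mul0r.
have [-> | _] /= := eqVneq (cnt_sa s a t.+1 i' j') 0%N.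
  by rewrite mulr0 !mul0r mulr0.
rewrite -[_ / _ * _ * v]mulrA (mulrA (cnt_sa s a t i j)%:R).
by rewrite natr_mul_divr ?cnt_sas_le_sa.
Qed.

Lemma sum_cnt_sa_Vterm t (v : S -> A -> R) :
  \sum_(i : S) \sum_(j : A) (cnt_sa s a t i j)%:R *
     \sum_(i' : S) \sum_(j' : A) Vterm s a t i j i' j' (v i' j')
  = \sum_(i' : S) \sum_(j' : A) (cnt_sa s a t.+1 i' j')%:R * v i' j'.
Proof.
under eq_bigr do under eq_bigr do rewrite mulr_sumr.
under eq_bigr do under eq_bigr do under eq_bigr do rewrite mulr_sumr.
under eq_bigr do under eq_bigr do under eq_bigr do under eq_bigr do
  rewrite cnt_sa_mul_Vterm.
rewrite exchange_big22; apply: eq_bigr => i' _; apply: eq_bigr => j' _.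
under eq_bigr do rewrite -mulr_suml -natr_sum.
by rewrite -mulr_suml -natr_sum sum_cnt_sas mulrA natr_mul_divr ?cnt_sa_le_s.
Qed.

Variable r : nat -> S -> A -> (S -> nat) -> R.

Lemma sum_cnt_sa_Vrec k t :
  \sum_(i : S) \sum_(j : A) (cnt_sa s a t i j)%:R * Vrec s a r k t i j
  = \sum_(t <= T < (t + k).+1) \sum_(i : S) \sum_(j : A)
       (cnt_sa s a T i j)%:R * r T i j (nvec s T).
Proof.
elim: k t => [|k IHk] t /=; first by rewrite addn0 big_nat1.
rewrite big_ltn ?ltnS ?leq_addr //.
under eq_bigr do under eq_bigr do rewrite mulrDr.
under eq_bigr do rewrite big_split /=.
by rewrite big_split /= sum_cnt_sa_Vterm IHk addSnnS.
Qed.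

Lemma nVE H t i j :
  nV H s a r t i j = (cnt_sa s a t i j)%:R * Vind H s a r t i j.
Proof. by rewrite /nV; case: eqP => [->|//]; rewrite mul0r. Qed.

End EmpiricalCounts.

Theorem lemma1 (R : realFieldType) (S A : finType) (M H : nat)
  (s : 'I_M -> nat -> S) (a : 'I_M -> nat -> A)
  (r : nat -> S -> A -> (S -> nat) -> R) (t : nat) :
  (1 <= t <= H)%N ->
  Rret H s a r t = \sum_(i : S) \sum_(j : A) nV H s a r t i j.
Proof.
case/andP => _ le_tH.
under eq_bigr do under eq_bigr do rewrite nVE.
by rewrite sum_cnt_sa_Vrec subnKC.
Qed.
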